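(* Let $H(\mathbb{C})$ be the space of entire functions with the topology of uniform convergence on compact subsets, and for $a\in\mathbb{C}\setminus\{0\}$ let $T:H(\mathbb{C})\to H(\mathbb{C})$ be the translation operator $T(f)(z)=f(z+a)$. Then $T$ is not supermixing.
   Context: $H(\mathbb{C})$ is metrizable (a Fréchet space). A continuous map $T:X\to X$ is supermixing if for each nonempty open subset $U$ of $X$, $X=\overline{\bigcup_{i=0}^\infty\bigcap_{n=i}^\infty T^n(U)}$. *)

From Stdlib Require Import Reals.
From Coquelicot Require Import Coquelicot.
Open Scope R_scope.

Definition entire (f : C -> C) : Prop :=
  forall z : C, @ex_derive C_AbsRing C_NormedModule f z.

(* Every compact set lies in a closed disk, so a set U of
   entire functions is open iff around each of its points it contains a
   basic neighbourhood {g | sup_{|z|<=r} |g z - f z| < eps}. *)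
Definition H_open (U : (C -> C) -> Prop) : Prop :=
  forall f, entire f -> U f ->
    exists r eps : R, 0 < eps /\
      forall g, entire g ->
        (forall z : C, Cmod z <= r -> Cmod (Cminus (g z) (f z)) < eps) -> U g.

Definition H_nonempty (U : (C -> C) -> Prop) : Prop :=
  exists f, entire f /\ U f.

Definition H_dense (S : (C -> C) -> Prop) : Prop :=
  forall V, H_open V -> H_nonempty V -> exists g, entire g /\ V g /\ S g.

Definition H_image_iter (T : (C -> C) -> (C -> C)) (n : nat)
  (U : (C -> C) -> Prop) : (C -> C) -> Prop :=
  fun g => exists f, entire f /\ U f /\ Nat.iter n T f = g.

Definition supermixing (T : (C -> C) -> (C -> C)) : Prop :=
  forall U, H_open U -> H_nonempty U ->
    H_dense (fun g => entire g /\ exists i : nat, forall n : nat,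
                (i <= n)%nat -> H_image_iter T n U g).

Definition translation (a : C) (f : C -> C) : C -> C :=
  fun z => f (Cplus z a).

From Stdlib Require Import Reals Lra.
From Coquelicot Require Import Coquelicot.

(* Fix a point p and consider the open set
     U = { f entire | |f p| < 1 and 2 < |f (p + a)| },
   which is nonempty because p <> p + a.  Since T is injective, an entire
   function g lying in both T^n(U) and T^(n+1)(U) would be g = T^n f1 =
   T^n (T f2) with f1 = T f2, f1, f2 in U; then f1 p = f2 (p + a), which is
   impossible as |f1 p| < 1 < 2 < |f2 (p + a)|.  So consecutive images of U
   are disjoint and the set  \bigcup_i \bigcap_(n >= i) T^n(U)  is empty,
   whence not dense. *)

Lemma Cmod_close_upper (u v : C) (eps : R) :
  Cmod (Cminus v u) < eps -> Cmod v < Cmod u + eps.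
Proof.
  intro Hvu.
  assert (Htri := Cmod_triangle u (Cminus v u)).
  replace (Cplus u (Cminus v u)) with v in Htri by
    (destruct u, v; unfold Cminus, Cplus, Copp; simpl; f_equal; ring).
  lra.
Qed.

Lemma Cmod_close_lower (u v : C) (eps : R) :
  Cmod (Cminus v u) < eps -> Cmod u - eps < Cmod v.
Proof.
  intro Hvu.
  assert (Hsym : Cmod (Cminus u v) < eps).
  { replace (Cminus u v) with (Copp (Cminus v u)) by
      (destruct u, v; unfold Cminus, Cplus, Copp; simpl; f_equal; ring).
    rewrite Cmod_opp; exact Hvu. }
  assert (Hup := Cmod_close_upper v u eps Hsym).
  lra.
Qed.

Definition gap_set (p q : C) (f : C -> C) : Prop :=
  Cmod (f p) < 1 /\ 2 < Cmod (f q).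

(* Two strict inequalities on point values are stable under uniform
   perturbation on a disk containing p and q. *)
Lemma gap_set_open (p q : C) : H_open (gap_set p q).
Proof.
  intros f _ [Hp Hq].
  set (eps := Rmin (1 - Cmod (f p)) (Cmod (f q) - 2)).
  exists (Rmax (Cmod p) (Cmod q)), eps.
  split; [apply Rmin_glb_lt; lra|].
  intros g _ Hclose; split.
  - assert (Hup := Cmod_close_upper _ _ _ (Hclose p (Rmax_l _ _))).
    assert (Heps := Rmin_l (1 - Cmod (f p)) (Cmod (f q) - 2)).
    fold eps in Heps; lra.
  - assert (Hlow := Cmod_close_lower _ _ _ (Hclose q (Rmax_r _ _))).
    assert (Heps := Rmin_r (1 - Cmod (f p)) (Cmod (f q) - 2)).
    fold eps in Heps; lra.
Qed.

(* For p <> q the affine map z |-> (z - p) * 3/|q - p| lies in the gap set. *)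
Lemma gap_set_nonempty (p q : C) : p <> q -> H_nonempty (gap_set p q).
Proof.
  intro Hpq.
  assert (Hdist : 0 < Cmod (Cminus q p)).
  { apply Cmod_gt_0; intro E; apply Hpq.
    destruct p, q; injection E; intros; unfold Cminus, Cplus, Copp in *;
      simpl in *; f_equal; lra. }
  set (k := RtoC (3 / Cmod (Cminus q p))).
  exists (fun z => Cmult (Cminus z p) k); split.
  - intro z.
    apply (ex_derive_scal_l (V := C_NormedModule) (fun x : C => Cminus x p)).
    exact (ex_derive_minus (K := C_AbsRing) (fun x : C_AbsRing => x)
             (fun _ => p) z (ex_derive_id z) (ex_derive_const _ z)).
  - split; rewrite Cmod_mult.
    + replace (Cminus p p) with (RtoC 0) by
        (destruct p; unfold Cminus, Cplus, Copp, RtoC; simpl; f_equal; ring).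
      rewrite Cmod_0; lra.
    + unfold k; rewrite Cmod_R, Rabs_pos_eq.
      * field_simplify; lra.
      * apply Rlt_le, Rdiv_lt_0_compat; lra.
Qed.

Lemma Cminus_Cplus_cancel (a w : C) : Cplus (Cminus w a) a = w.
Proof.
  destruct w, a; unfold Cminus, Cplus, Copp; simpl; f_equal; ring.
Qed.

Lemma translation_iter_inj (a : C) (n : nat) (f h : C -> C) :
  (forall z, Nat.iter n (translation a) f z = Nat.iter n (translation a) h z) ->
  forall z, f z = h z.
Proof.
  revert f h; induction n as [|n IH]; intros f h Heq.
  - exact Heq.
  - apply IH; intro w.
    rewrite <- (Cminus_Cplus_cancel a w).
    specialize (Heq (Cminus w a)); rewrite !Nat.iter_succ in Heq.
    exact Heq.
Qed.

Lemma translation_consecutive_images_disjoint (a p : C) (n : nat) (g : C -> C) :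
  H_image_iter (translation a) n (gap_set p (Cplus p a)) g ->
  ~ H_image_iter (translation a) (S n) (gap_set p (Cplus p a)) g.
Proof.
  intros [f1 [_ [[Hsmall _] E1]]] [f2 [_ [[_ Hlarge] E2]]].
  rewrite Nat.iter_succ_r in E2.
  assert (Hf1 : forall z, f1 z = translation a f2 z).
  { apply (translation_iter_inj a n); intro z; rewrite E1, E2; reflexivity. }
  rewrite Hf1 in Hsmall; unfold translation in Hsmall.
  lra.
Qed.

Theorem mainTheorem7 (a : C) (ha : a <> RtoC 0) :
  ~ supermixing (translation a).
Proof.
  intro Hsuper.
  set (U := gap_set (RtoC 0) (Cplus (RtoC 0) a)).
  assert (Hsep : RtoC 0 <> Cplus (RtoC 0) a).
  { intro E; apply ha; rewrite E; destruct a; unfold Cplus, RtoC; simpl;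
      f_equal; ring. }
  (* Density, tested against the whole space, yields some g in every
     T^n(U) with n >= i. *)
  destruct (Hsuper U (gap_set_open _ _) (gap_set_nonempty _ _ Hsep)
              (fun _ => True)) as [g [_ [_ [_ [i Hg]]]]].
  - intros f _ _; exists 1, 1; split; [lra | auto].
  - exists (fun _ => RtoC 0); split; [intro z; apply ex_derive_const | exact I].
  - exact (translation_consecutive_images_disjoint a (RtoC 0) i g
             (Hg i (le_n i)) (Hg (S i) (le_S _ _ (le_n i)))).
Qed.
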